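(* Let $\mathbf{T}\subset\mathbb{S}^3$ be a $\mathbb{Z}_2$-symmetric spherical tetrahedron with dihedral angles $A$, $B=E$, $C=F$, $D$ and edge lengths $l_A$, $l_B=l_E$, $l_C=l_F$, $l_D$. Put $a_+=\cos\frac{l_A+l_D}{2}$, $a_-=\cos\frac{l_A-l_D}{2}$, $b=\cos l_B$, $c=\cos l_C$, $\mathcal{A}_+=\cos\frac{A+D}{2}$, $\mathcal{A}_-=\cos\frac{D-A}{2}$, $\mathcal{B}=\cos B$, $\mathcal{C}=\cos C$. Then there exists a (symmetric) spherical tetrahedron $\mathbf{T}_s$, with dihedral angles $\alpha,\beta,\gamma$ (each appearing on a pair of opposite edges) and corresponding edge lengths $l_\alpha,l_\beta,l_\gamma$, whose Gram matrix is $$G_s=\begin{pmatrix}1&-\cos\alpha&-\cos\beta&-\cos\gamma\\-\cos\alpha&1&-\cos\gamma&-\cos\beta\\-\cos\beta&-\cos\gamma&1&-\cos\alpha\\-\cos\gamma&-\cos\beta&-\cos\alpha&1\end{pmatrix}=\begin{pmatrix}1&-\frac{\mathcal{A}_+}{\mathcal{A}_-}&-\frac{\mathcal{B}}{\mathcal{A}_-}&-\frac{\mathcal{C}}{\mathcal{A}_-}\\-\frac{\mathcal{A}_+}{\mathcal{A}_-}&1&-\frac{\mathcal{C}}{\mathcal{A}_-}&-\frac{\mathcal{B}}{\mathcal{A}_-}\\-\frac{\mathcal{B}}{\mathcal{A}_-}&-\frac{\mathcal{C}}{\mathcal{A}_-}&1&-\frac{\mathcal{A}_+}{\mathcal{A}_-}\\-\frac{\mathcal{C}}{\mathcal{A}_-}&-\frac{\mathcal{B}}{\mathcal{A}_-}&-\frac{\mathcal{A}_+}{\mathcal{A}_-}&1\end{pmatrix}$$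 and whose edge matrix is $$G^\star_s=\begin{pmatrix}1&\cos l_\alpha&\cos l_\beta&\cos l_\gamma\\\cos l_\alpha&1&\cos l_\gamma&\cos l_\beta\\\cos l_\beta&\cos l_\gamma&1&\cos l_\alpha\\\cos l_\gamma&\cos l_\beta&\cos l_\alpha&1\end{pmatrix}=\begin{pmatrix}1&\frac{a_+}{a_-}&\frac{b}{a_-}&\frac{c}{a_-}\\\frac{a_+}{a_-}&1&\frac{c}{a_-}&\frac{b}{a_-}\\\frac{b}{a_-}&\frac{c}{a_-}&1&\frac{a_+}{a_-}\\\frac{c}{a_-}&\frac{b}{a_-}&\frac{a_+}{a_-}&1\end{pmatrix}.$$
   Context: A spherical tetrahedron $\mathbf{T}\subset\mathbb{S}^3\subset\mathbb{R}^4$ is the intersection of $\mathbb{S}^3$ with the cone over four linearly independent unit vectors $\mathrm{p}_0,\dots,\mathrm{p}_3$. Edge lengths $l_{ij}\in[0,\pi]$: $\cos l_{ij}=\langle\mathrm{p}_i,\mathrm{p}_j\rangle$; dihedral angles $\alpha_{ij}\in[0,\pi]$: $\cos\alpha_{ij}=-\langle\mathrm{v}_i,\mathrm{v}_j\rangle$ with $\mathrm{v}_i$ the outer unit normal of the face opposite $\mathrm{p}_i$. The edge matrix of a tetrahedron is $(\langle\mathrm{p}_i,\mathrm{p}_j\rangle)_{i,j=0}^3$ and its Gram matrix is $(\langle\mathrm{v}_i,\mathrm{v}_j\rangle)_{i,j=0}^3$. Notation for $\mathbf{T}$: $l_A=l_{01}$, $l_B=l_{02}$, $l_C=l_{03}$,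 $l_D=l_{23}$, $l_E=l_{13}$, $l_F=l_{12}$; $A,\dots,F$ are the dihedral angles along the edges of lengths $l_A,\dots,l_F$. $\mathbf{T}$ is $\mathbb{Z}_2$-symmetric if invariant under rotation through $\pi$ about the axis through the midpoints of the edges $\mathrm{p}_0\mathrm{p}_1$ and $\mathrm{p}_2\mathrm{p}_3$ (so $l_B=l_E$, $l_C=l_F$, $B=E$, $C=F$). A tetrahedron is called symmetric if opposite edges have equal lengths (equivalently, equal dihedral angles). *)

From HB Require Import structures.
From mathcomp Require Import all_boot all_order all_algebra.
From mathcomp Require Import all_classical all_reals all_analysis.
Set Implicit Arguments. Unset Strict Implicit. Unset Printing Implicit Defensive.
Import Order.TTheory GRing.Theory Num.Theory.
Local Open Scope ring_scope.

Definition dot {R : realType} (u v : 'rV[R]_4) : R := (u *m v^T) 0 0.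

Definition rows_mx {R : realType} (p : 'I_4 -> 'rV[R]_4) : 'M[R]_4 :=
  \matrix_(i < 4, j < 4) p i 0 j.

Definition spherical_tetrahedron {R : realType} (p : 'I_4 -> 'rV[R]_4) : Prop :=
  (forall i, dot (p i) (p i) = 1) /\ row_free (rows_mx p).

Definition outer_normal {R : realType} (p : 'I_4 -> 'rV[R]_4) (i : 'I_4)
  (v : 'rV[R]_4) : Prop :=
  dot v v = 1 /\ (forall j, j != i -> dot v (p j) = 0) /\ dot v (p i) < 0.

Definition edge_matrix {R : realType} (p : 'I_4 -> 'rV[R]_4) : 'M[R]_4 :=
  \matrix_(i < 4, j < 4) dot (p i) (p j).

Definition is_gram_matrix {R : realType} (p : 'I_4 -> 'rV[R]_4) (G : 'M[R]_4) : Prop :=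
  exists v : 'I_4 -> 'rV[R]_4,
    (forall i, outer_normal p i (v i)) /\
    G = \matrix_(i < 4, j < 4) dot (v i) (v j).

Definition edge_length {R : realType} (p : 'I_4 -> 'rV[R]_4) (i j : 'I_4) : R :=
  acos (dot (p i) (p j)).

Definition dihedral_angle {R : realType} (v : 'I_4 -> 'rV[R]_4) (i j : 'I_4) : R :=
  acos (- dot (v i) (v j)).

(* Z2-symmetry: invariance under the rotation through pi about the axis through
   the midpoints of p0p1 and p2p3, i.e. an orthogonal map of R^4 exchanging
   p0 <-> p1 and p2 <-> p3 (since the p_i form a basis, such a map is unique and
   is exactly that rotation). *)
Definition Z2_symmetric {R : realType} (p : 'I_4 -> 'rV[R]_4) : Prop :=
  exists M : 'M[R]_4,
    M *m M^T = 1%:M /\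
    p 0 *m M = p 1 /\ p 1 *m M = p 0 /\
    p 2%:R *m M = p 3%:R /\ p 3%:R *m M = p 2%:R.

Definition sym_pattern {R : realType} (x y z : R) : 'M[R]_4 :=
  \matrix_(i < 4, j < 4)
    nth 0 (nth [::] [:: [:: 1; x; y; z];
                       [:: x; 1; z; y];
                       [:: y; z; 1; x];
                       [:: z; y; x; 1]] i) j.

From HB Require Import structures.
From mathcomp Require Import all_boot all_order all_algebra.
From mathcomp Require Import all_classical all_reals all_analysis.
From mathcomp Require Import ring lra.
Set Implicit Arguments. Unset Strict Implicit. Unset Printing Implicit Defensive.
Import Order.TTheory GRing.Theory Num.Theory.
Local Open Scope ring_scope.

(* The edge matrix of a Z2-symmetric tetrahedron is G = [1 a b c; a 1 c b; b c 1 d; c b d 1]; it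
   preserves span(e0 + e1, e2 + e3) and span(e0 - e1, e2 - e3), acting there by the blocks
   [1 +- a, b +- c; b +- c, 1 +- d].  With r = sqrt((2 + 2a)(2 + 2d)) = 4 cos(lA/2) cos(lD/2),
   r' = sqrt((2 - 2a)(2 - 2d)) = 4 sin(lA/2) sin(lD/2), Z = 2(b + c) and Z' = 2(b - c), one gets
   a_- = (r + r')/4, a_+ = (r - r')/4, and the block determinants are (r^2 - Z^2)/4 and
   (r'^2 - Z'^2)/4.  The Gram matrix of the outer normals is G^-1 normalized to a unit diagonal,
   so the half-angle formulas express A_+-, cos B and cos C through the same four numbers.
   Finally, for any positive l_0, ..., l_3 with sum 4 there is a symmetric tetrahedron whose
   edge matrix has eigenvalues l_k on the characters of (Z/2)^2 and whose Gram matrix is the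
   normalized Hadamard transform of the 1/l_k; the eigenvalues 2(r +- Z)/(r + r') and
   2(r' +- Z')/(r + r') produce exactly the two matrices of the statement. *)

Lemma ord4_ind (P : 'I_4 -> Prop) : P 0 -> P 1 -> P 2%:R -> P 3%:R -> forall i, P i.
Proof.
move=> P0 P1 P2 P3 [[|[|[|[|//]]]] lti].
- by rewrite (_ : Ordinal lti = 0) //; apply/val_inj.
- by rewrite (_ : Ordinal lti = 1) //; apply/val_inj.
- by rewrite (_ : Ordinal lti = 2%:R) //; apply/val_inj.
- by rewrite (_ : Ordinal lti = 3%:R) //; apply/val_inj.
Qed.

Section InnerProduct.
Variable R : realType.
Implicit Types (x y z : 'rV[R]_4) (p : 'I_4 -> 'rV[R]_4).

Lemma dotC x y : dot x y = dot y x.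
Proof.
by rewrite /dot -[y *m x^T]trmxK trmx_mul trmxK [in RHS]mxE.
Qed.

Lemma dotDl x y z : dot (x + y) z = dot x z + dot y z.
Proof. by rewrite /dot mulmxDl mxE. Qed.

Lemma dotNl x z : dot (- x) z = - dot x z.
Proof. by rewrite /dot mulNmx mxE. Qed.

Lemma dotDr x y z : dot z (x + y) = dot z x + dot z y.
Proof. by rewrite dotC dotDl !(dotC z). Qed.

Lemma dotNr x z : dot z (- x) = - dot z x.
Proof. by rewrite dotC dotNl dotC. Qed.

Lemma dot_orthomx (M : 'M[R]_4) x y :
  M *m M^T = 1%:M -> dot (x *m M) (y *m M) = dot x y.
Proof. by move=> MMT; rewrite /dot trmx_mul mulmxA -(mulmxA x) MMT mulmx1. Qed.

Lemma mul_rows_mx_tr (u w : 'I_4 -> 'rV[R]_4) i j :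
  (rows_mx u *m (rows_mx w)^T) i j = dot (u i) (w j).
Proof. by rewrite /dot !mxE; apply: eq_bigr => k _; rewrite !mxE. Qed.

Lemma edge_matrixE p : edge_matrix p = rows_mx p *m (rows_mx p)^T.
Proof. by apply/matrixP => i j; rewrite mul_rows_mx_tr mxE. Qed.

Lemma dot_ge0 x : 0 <= dot x x.
Proof. by rewrite /dot mxE; apply: sumr_ge0 => k _; rewrite mxE -expr2 sqr_ge0. Qed.

Lemma dot_gt0 x : x != 0 -> 0 < dot x x.
Proof.
move=> x_neq0; rewrite lt_def dot_ge0 andbT; apply: contra x_neq0 => /eqP xx0.
apply/eqP/rowP => k; rewrite mxE.
have : x 0 k * x^T k 0 = 0.
  move: xx0; rewrite /dot mxE => /psumr_eq0P; apply=> // j _.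
  by rewrite mxE -expr2 sqr_ge0.
by rewrite mxE => /eqP; rewrite mulf_eq0 orbb => /eqP.
Qed.

Lemma dot_unit_bound x y : dot x x = 1 -> dot y y = 1 -> -1 <= dot x y <= 1.
Proof.
move=> xx1 yy1; have := dot_ge0 (x + y); have := dot_ge0 (x - y).
rewrite !dotDl !dotDr !dotNl !dotNr xx1 yy1 (dotC y x) => ? ?.
by apply/andP; split; lra.
Qed.

Lemma edge_matrix_posdef p x : spherical_tetrahedron p -> x != 0 ->
  0 < (x *m edge_matrix p *m x^T) 0 0.
Proof.
move=> [_ free_p] x_neq0; rewrite edge_matrixE.
have xp_neq0 : x *m rows_mx p != 0.
  apply: contra x_neq0 => /eqP xp0.
  have unit_p : rows_mx p \in unitmx by rewrite -row_free_unit.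
  by rewrite -(mulmxK unit_p x) xp0 mul0mx.
by move: (dot_gt0 xp_neq0); rewrite /dot trmx_mul !mulmxA.
Qed.

End InnerProduct.

Section HalfAngles.
Variable R : realType.
Implicit Types s t x y : R.

Lemma sqrtr_unique x y : 0 <= y -> y ^+ 2 = x -> Num.sqrt x = y.
Proof. by move=> y_ge0 <-; rewrite sqrtr_sqr ger0_norm. Qed.

Lemma cos_sin_half_acos s : -1 <= s <= 1 ->
  cos (acos s / 2) = Num.sqrt (2 + 2 * s) / 2 /\
  sin (acos s / 2) = Num.sqrt (2 - 2 * s) / 2.
Proof.
move=> s_bd; have := acos_ge0 s_bd; have := acos_lepi s_bd; have := pi_gt0 R.
set x := acos s / 2 => pi_gt0 le_pi ge0.
have cos_2x : cos x ^+ 2 - sin x ^+ 2 = s.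
  by rewrite !expr2 -cosD /x -splitr acosK // in_itv.
have cos_ge0 : 0 <= cos x by apply: cos_ge0_pihalf; apply/andP; split; rewrite /x; lra.
have sin_ge0 : 0 <= sin x by apply: sin_ge0_pi; apply/andP; split; rewrite /x; lra.
have := cos2Dsin2 x => pythagoras.
rewrite (@sqrtr_unique (2 + 2 * s) (2 * cos x)) ?mulr_ge0 //; last first.
  by rewrite exprMn; lra.
rewrite (@sqrtr_unique (2 - 2 * s) (2 * sin x)) ?mulr_ge0 //; last first.
  by rewrite exprMn; lra.
by split; field.
Qed.

Lemma cos_half_acosD s t : -1 <= s <= 1 -> -1 <= t <= 1 ->
  cos ((acos s + acos t) / 2) =
  (Num.sqrt ((2 + 2 * s) * (2 + 2 * t)) - Num.sqrt ((2 - 2 * s) * (2 - 2 * t))) / 4.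
Proof.
move=> s_bd t_bd; have [cs ss] := cos_sin_half_acos s_bd.
have [ct st] := cos_sin_half_acos t_bd.
rewrite mulrDl cosD cs ss ct st !sqrtrM; first field.
all: move: s_bd t_bd => /andP[? ?] /andP[? ?]; lra.
Qed.

Lemma cos_half_acosB s t : -1 <= s <= 1 -> -1 <= t <= 1 ->
  cos ((acos s - acos t) / 2) =
  (Num.sqrt ((2 + 2 * s) * (2 + 2 * t)) + Num.sqrt ((2 - 2 * s) * (2 - 2 * t))) / 4.
Proof.
move=> s_bd t_bd; have [cs ss] := cos_sin_half_acos s_bd.
have [ct st] := cos_sin_half_acos t_bd.
rewrite mulrBl cosB cs ss ct st !sqrtrM; first field.
all: move: s_bd t_bd => /andP[? ?] /andP[? ?]; lra.
Qed.

Lemma cos_acos_dot (x y : 'rV[R]_4) : dot x x = 1 -> dot y y = 1 ->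
  cos (acos (dot x y)) = dot x y /\ cos (acos (- dot x y)) = - dot x y.
Proof.
move=> /dot_unit_bound/[apply] /andP[? ?].
by split; rewrite acosK // in_itv /=; apply/andP; split; lra.
Qed.

End HalfAngles.

Section OuterNormals.
Variable R : realType.

Lemma neg_inv_sqrtr (h k : R) : h < 0 -> h * k * h = 1 -> h = - (Num.sqrt k)^-1.
Proof.
move=> h_lt0 hkh; have h_neq0 : h != 0 by rewrite lt_eqF.
have -> : k = (h ^+ 2)^-1 by rewrite -[_^-1]mul1r -hkh; field.
by rewrite sqrtrV ?sqr_ge0 // sqrtr_sqr invrK ltr0_norm // opprK.
Qed.

(* With P, V the matrices of rows p_i, v_i: V P^T = diag h with h_i = <v_i, p_i> < 0, so
   V V^T = diag h K^T diag h, and <v_i, v_i> = 1 forces h_i = - 1 / sqrt K_ii. *)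
Lemma dot_outer_normals (p v : 'I_4 -> 'rV[R]_4) (K : 'M[R]_4) :
  spherical_tetrahedron p -> (forall i, outer_normal p i (v i)) ->
  K *m edge_matrix p = 1%:M ->
  forall i j, dot (v i) (v j) = K i j / (Num.sqrt (K i i) * Num.sqrt (K j j)).
Proof.
move=> [_ free_p] normal KE.
have unit_pT : (rows_mx p)^T \in unitmx by rewrite unitmx_tr -row_free_unit.
pose h := \row_i dot (v i) (p i).
have h_lt0 i : h 0 i < 0 by rewrite mxE; case: (normal i) => _ [].
have VP : rows_mx v *m (rows_mx p)^T = diag_mx h.
  apply/matrixP => i j; rewrite mul_rows_mx_tr mxE.
  have [<-|neq_ij] := eqVneq i j; first by rewrite mxE mulr1n.
  by case: (normal i) => _ [orth _]; rewrite mulr0n orth // eq_sym.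
have V_eq : rows_mx v = diag_mx h *m K *m rows_mx p.
  apply: (can_inj (mulmxK unit_pT)).
  by rewrite VP -!mulmxA -edge_matrixE KE mulmx1.
have VVT : rows_mx v *m (rows_mx v)^T = diag_mx h *m K^T *m diag_mx h.
  rewrite V_eq !trmx_mul tr_diag_mx !mulmxA -(mulmxA _ (rows_mx p)).
  by rewrite -edge_matrixE -(mulmxA (diag_mx h)) KE mulmx1.
have dotE i j : dot (v i) (v j) = h 0 i * K j i * h 0 j.
  by rewrite -mul_rows_mx_tr VVT mul_mx_diag mxE mul_diag_mx !mxE.
have h_eq i : h 0 i = - (Num.sqrt (K i i))^-1.
  by apply: neg_inv_sqrtr (h_lt0 i) _; rewrite -dotE; case: (normal i).
have sqrtK_neq0 i : Num.sqrt (K i i) != 0.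
  by apply: contraTneq (h_lt0 i); rewrite h_eq => ->; rewrite invr0 oppr0 ltxx.
move=> i j; rewrite dotC dotE !h_eq; field.
by rewrite !sqrtK_neq0.
Qed.

End OuterNormals.

Section SymmetricTetrahedron.
Variable R : realType.

Lemma dot_rowE (f g : 'I_4 -> R) :
  dot (\row_k f k) (\row_k g k) = f 0 * g 0 + f 1 * g 1 + f 2%:R * g 2%:R + f 3%:R * g 3%:R.
Proof.
rewrite /dot !mxE !big_ord_recr big_ord0 /= !mxE add0r.
by congr (f _ * g _ + f _ * g _ + f _ * g _ + f _ * g _); apply/val_inj.
Qed.

Definition hadamard4 (k i : 'I_4) : R :=
  nth 0 (nth [::] [:: [:: 1; 1; 1; 1]; [:: 1; 1; -1; -1];
                      [:: 1; -1; 1; -1]; [:: 1; -1; -1; 1]] k) i.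

Definition seq4 (x0 x1 x2 x3 : R) (k : 'I_4) : R := nth 0 [:: x0; x1; x2; x3] k.

(* The witness has vertices sqrt(l_k) chi_k(i) / 2 and normals - chi_k(i) / (sqrt(l_k T)). *)
Lemma symmetric_tetrahedron_exists (l0 l1 l2 l3 : R) :
  0 < l0 -> 0 < l1 -> 0 < l2 -> 0 < l3 -> l0 + l1 + l2 + l3 = 4 ->
  let T := l0^-1 + l1^-1 + l2^-1 + l3^-1 in
  exists q : 'I_4 -> 'rV[R]_4,
    [/\ spherical_tetrahedron q,
        is_gram_matrix q (sym_pattern ((l0^-1 + l1^-1 - l2^-1 - l3^-1) / T)
                                      ((l0^-1 - l1^-1 + l2^-1 - l3^-1) / T)
                                      ((l0^-1 - l1^-1 - l2^-1 + l3^-1) / T)) &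
        edge_matrix q = sym_pattern ((l0 + l1 - l2 - l3) / 4)
                                    ((l0 - l1 + l2 - l3) / 4)
                                    ((l0 - l1 - l2 + l3) / 4)].
Proof.
have sqrt_pos (l : R) : 0 < l -> exists2 s, 0 < s & l = s ^+ 2.
  by move=> l_gt0; exists (Num.sqrt l); rewrite ?sqrtr_gt0 ?sqr_sqrtr ?ltW.
move=> /sqrt_pos[s0 s0_gt0 ->] /sqrt_pos[s1 s1_gt0 ->].
move=> /sqrt_pos[s2 s2_gt0 ->] /sqrt_pos[s3 s3_gt0 ->] sum4 T.
have [N N_gt0 TE] : exists2 N, 0 < N & T = N ^+ 2.
  by apply: sqrt_pos; rewrite !addr_gt0 // invr_gt0 exprn_gt0.
rewrite TE; move: TE; rewrite /T => {T} TE.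
(* [field] cannot use the constraints on the s_k and N, so unit entries are first rewritten
   with sumE and TE1. *)
have sumE : (s0 ^+ 2 + s1 ^+ 2 + s2 ^+ 2 + s3 ^+ 2) / 4 = 1 by rewrite sum4; field.
have TE1 : (s0 ^- 2 + s1 ^- 2 + s2 ^- 2 + s3 ^- 2) / N ^+ 2 = 1.
  by rewrite TE divff // expf_neq0 // gt_eqF.
pose s := seq4 s0 s1 s2 s3.
pose q i := \row_k (s k * hadamard4 k i / 2).
pose w i := \row_k (- (hadamard4 k i / s k) / N).
exists q; split; first split.
- by apply: ord4_ind; rewrite dot_rowE /s /seq4 /hadamard4 /= -[RHS]sumE; field.
- apply/row_freeP; exists (\matrix_(k, j) (hadamard4 k j / (2 * s k))).
  apply/matrixP; apply: ord4_ind; apply: ord4_ind;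
    rewrite !mxE !big_ord_recr big_ord0 /= !mxE /s /seq4 /hadamard4 /=; field;
    by rewrite !gt_eqF.
- exists w; split.
  + move=> i; split; last split.
    * move: i; apply: ord4_ind; rewrite dot_rowE /s /seq4 /hadamard4 /= -[RHS]TE1;
        field; by rewrite !gt_eqF.
    * move: i; apply: ord4_ind; apply: ord4_ind => //= _;
        rewrite dot_rowE /s /seq4 /hadamard4 /=; field;
        by rewrite !gt_eqF.
    * have -> : dot (w i) (q i) = - (2 / N).
        move: i; apply: ord4_ind; rewrite dot_rowE /s /seq4 /hadamard4 /=; field;
        by rewrite !gt_eqF.
      by rewrite oppr_lt0 divr_gt0.
  + apply/matrixP; apply: ord4_ind; apply: ord4_ind;
      rewrite !mxE dot_rowE /s /seq4 /hadamard4 /= -?[LHS]TE1; field;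
      by rewrite !gt_eqF.
- have eq1_sum x : x = (s0 ^+ 2 + s1 ^+ 2 + s2 ^+ 2 + s3 ^+ 2) / 4 -> x = 1.
    by rewrite sumE.
  by apply/matrixP; apply: ord4_ind; apply: ord4_ind;
    rewrite !mxE dot_rowE /s /seq4 /hadamard4 /=; try apply: eq1_sum; field.
Qed.

End SymmetricTetrahedron.

Section Z2Pattern.
Variable R : realType.
Variables a d b c : R.

Definition z2_pattern : 'M[R]_4 := \matrix_(i < 4, j < 4)
  nth 0 (nth [::] [:: [:: 1; a; b; c]; [:: a; 1; c; b];
                      [:: b; c; 1; d]; [:: c; b; d; 1]] i) j.

Let X : R := 2 + 2 * a.
Let X' : R := 2 - 2 * a.
Let Y : R := 2 + 2 * d.
Let Y' : R := 2 - 2 * d.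
Let Z : R := 2 * (b + c).
Let Z' : R := 2 * (b - c).

Definition z2_det_plus := X * Y - Z ^+ 2.
Definition z2_det_minus := X' * Y' - Z' ^+ 2.

Let Dp : R := z2_det_plus.
Let Dm : R := z2_det_minus.
Let S0 : R := Y / Dp + Y' / Dm.
Let S2 : R := X / Dp + X' / Dm.
Let K01 : R := Y / Dp - Y' / Dm.
Let K23 : R := X / Dp - X' / Dm.
Let K02 : R := - (Z / Dp + Z' / Dm).
Let K03 : R := - (Z / Dp) + Z' / Dm.

(* In the basis (e0 + e1, e2 + e3, e0 - e1, e2 - e3), z2_pattern splits into the two 2x2 blocks
   [2 +- 2a, 2(b +- c); 2(b +- c), 2 +- 2d] / 2 of determinants z2_det_plus / 4 and
   z2_det_minus / 4; invert them and change basis back. *)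
Definition z2_pattern_inv : 'M[R]_4 := \matrix_(i < 4, j < 4)
  nth 0 (nth [::] [:: [:: S0; K01; K02; K03]; [:: K01; S0; K03; K02];
                      [:: K02; K03; S2; K23]; [:: K03; K02; K23; S2]] i) j.

Lemma mul_z2_pattern_inv :
  z2_det_plus != 0 -> z2_det_minus != 0 -> z2_pattern_inv *m z2_pattern = 1%:M.
Proof.
rewrite -/Dp -/Dm => Dp_neq0 Dm_neq0.
apply/matrixP; apply: ord4_ind; apply: ord4_ind;
  rewrite !mxE !big_ord_recr big_ord0 /= !mxE /=;
  move: Dp_neq0 Dm_neq0; rewrite /S0 /S2 /K01 /K23 /K02 /K03 /Dp /Dm;
  rewrite /z2_det_plus /z2_det_minus /X /X' /Y /Y' /Z /Z' => Dp_neq0 Dm_neq0;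
  by field; rewrite Dp_neq0 Dm_neq0.
Qed.

Lemma z2_pattern_posdef_bounds :
  (forall x : 'rV[R]_4, x != 0 -> 0 < (x *m z2_pattern *m x^T) 0 0) ->
  [/\ -1 < a < 1, -1 < d < 1, 0 < z2_det_plus & 0 < z2_det_minus].
Proof.
move=> posdef.
pose form c0 c1 c2 c3 := c0 ^+ 2 + c1 ^+ 2 + c2 ^+ 2 + c3 ^+ 2 + 2 * a * c0 * c1
  + 2 * d * c2 * c3 + 2 * b * (c0 * c2 + c1 * c3) + 2 * c * (c0 * c3 + c1 * c2).
have form_gt0 c0 c1 c2 c3 : c0 != 0 \/ c2 != 0 -> 0 < form c0 c1 c2 c3.
  pose x := \row_k seq4 c0 c1 c2 c3 k.
  move=> c_neq0; have x_neq0 : x != 0.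
    apply/negP => /eqP/rowP x0; have := x0 0; have := x0 2%:R.
    by rewrite !mxE /seq4 /=; case: c_neq0 => /eqP c_neq0 ? ?.
  move: (posdef _ x_neq0); congr (_ < _).
  rewrite !mxE !big_ord_recr big_ord0 /= !mxE !big_ord_recr !big_ord0 /= !mxE.
  by rewrite /form /seq4 /=; ring.
have one_neq0 : (1 : R) != 0 := oner_neq0 R.
have := form_gt0 1 1 0 0 (or_introl one_neq0).
have := form_gt0 1 (-1) 0 0 (or_introl one_neq0).
have := form_gt0 0 0 1 1 (or_intror one_neq0).
have := form_gt0 0 0 1 (-1) (or_intror one_neq0).
rewrite /form => ? ? ? ?.
have X_gt0 : 0 < X by rewrite /X; lra.
have X'_gt0 : 0 < X' by rewrite /X'; lra.
have Y_gt0 : 0 < Y by rewrite /Y; lra.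
have Y'_gt0 : 0 < Y' by rewrite /Y'; lra.
have := form_gt0 Y Y (- Z) (- Z) (or_introl (lt0r_neq0 Y_gt0)).
have := form_gt0 Y' (- Y') (- Z') Z' (or_introl (lt0r_neq0 Y'_gt0)).
have -> : form Y' (- Y') (- Z') Z' = Y' * z2_det_minus.
  by rewrite /form /z2_det_minus /X' /Y' /Z'; ring.
have -> : form Y Y (- Z) (- Z) = Y * z2_det_plus.
  by rewrite /form /z2_det_plus /X /Y /Z; ring.
rewrite !pmulr_rgt0 // => ? ?.
by split=> //; apply/andP; split; lra.
Qed.

Hypotheses (a_bd : -1 < a < 1) (d_bd : -1 < d < 1).
Hypotheses (det_plus_gt0 : 0 < z2_det_plus) (det_minus_gt0 : 0 < z2_det_minus).

Let r : R := Num.sqrt (X * Y).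
Let r' : R := Num.sqrt (X' * Y').
Let Q : R := Num.sqrt S0 * Num.sqrt S2.

Let X_gt0 : 0 < X. Proof. by rewrite /X; case/andP: a_bd => *; lra. Qed.
Let X'_gt0 : 0 < X'. Proof. by rewrite /X'; case/andP: a_bd => *; lra. Qed.
Let Y_gt0 : 0 < Y. Proof. by rewrite /Y; case/andP: d_bd => *; lra. Qed.
Let Y'_gt0 : 0 < Y'. Proof. by rewrite /Y'; case/andP: d_bd => *; lra. Qed.
Let S0_gt0 : 0 < S0. Proof. by rewrite addr_gt0 // divr_gt0. Qed.
Let S2_gt0 : 0 < S2. Proof. by rewrite addr_gt0 // divr_gt0. Qed.
Let r_sqr : r ^+ 2 = X * Y. Proof. by rewrite sqr_sqrtr // mulr_ge0 // ltW. Qed.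
Let r'_sqr : r' ^+ 2 = X' * Y'. Proof. by rewrite sqr_sqrtr // mulr_ge0 // ltW. Qed.
Let r_gt0 : 0 < r. Proof. by rewrite sqrtr_gt0 mulr_gt0. Qed.
Let r'_gt0 : 0 < r'. Proof. by rewrite sqrtr_gt0 mulr_gt0. Qed.
Let Q_sqr : Q ^+ 2 = S0 * S2. Proof. by rewrite exprMn !sqr_sqrtr // ltW. Qed.
Let Q_gt0 : 0 < Q. Proof. by rewrite mulr_gt0 // sqrtr_gt0. Qed.

Lemma z2_dihedral_half_cosines :
  let K := z2_pattern_inv in
  let cosK i j := - (K i j / (Num.sqrt (K i i) * Num.sqrt (K j j))) in
  let A := acos (cosK 2%:R 3%:R) in
  let D := acos (cosK 0 1) in
  cos ((A + D) / 2) = (r' / Dm - r / Dp) / Q /\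
  cos ((D - A) / 2) = (r' / Dm + r / Dp) / Q.
Proof.
move=> K cosK A D.
have [Dp_neq0 Dm_neq0] : Dp != 0 /\ Dm != 0 by split; rewrite gt_eqF.
have [S0_neq0 S2_neq0 Q_neq0] : [/\ S0 != 0, S2 != 0 & Q != 0] by split; rewrite gt_eqF.
have sqrt_mul_self x : 0 <= x -> Num.sqrt x * Num.sqrt x = x.
  by move=> x_ge0; rewrite -expr2 sqr_sqrtr.
have sE : cosK 0 1 = - (K01 / S0).
  by rewrite /cosK /K /z2_pattern_inv !mxE /= sqrt_mul_self // ltW.
have tE : cosK 2%:R 3%:R = - (K23 / S2).
  by rewrite /cosK /K /z2_pattern_inv !mxE /= sqrt_mul_self // ltW.
have s_plus : 2 + 2 * cosK 0 1 = 4 * Y' / (Dm * S0).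
  rewrite sE (_ : K01 = S0 - 2 * Y' / Dm); last by rewrite /K01 /S0; ring.
  by field; rewrite S0_neq0 Dm_neq0.
have s_minus : 2 - 2 * cosK 0 1 = 4 * Y / (Dp * S0).
  rewrite sE (_ : K01 = 2 * Y / Dp - S0); last by rewrite /K01 /S0; ring.
  by field; rewrite S0_neq0 Dp_neq0.
have t_plus : 2 + 2 * cosK 2%:R 3%:R = 4 * X' / (Dm * S2).
  rewrite tE (_ : K23 = S2 - 2 * X' / Dm); last by rewrite /K23 /S2; ring.
  by field; rewrite S2_neq0 Dm_neq0.
have t_minus : 2 - 2 * cosK 2%:R 3%:R = 4 * X / (Dp * S2).
  rewrite tE (_ : K23 = 2 * X / Dp - S2); last by rewrite /K23 /S2; ring.
  by field; rewrite S2_neq0 Dp_neq0.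
have unit_bound (u : R) : 0 < 2 + 2 * u -> 0 < 2 - 2 * u -> -1 <= u <= 1.
  by move=> *; apply/andP; split; lra.
have s_bd : -1 <= cosK 0 1 <= 1.
  by apply: unit_bound; rewrite ?s_plus ?s_minus !divr_gt0 ?mulr_gt0.
have t_bd : -1 <= cosK 2%:R 3%:R <= 1.
  by apply: unit_bound; rewrite ?t_plus ?t_minus !divr_gt0 ?mulr_gt0.
have sqrt_plus :
    Num.sqrt ((2 + 2 * cosK 0 1) * (2 + 2 * cosK 2%:R 3%:R)) = 4 * r' / (Dm * Q).
  rewrite s_plus t_plus; apply: sqrtr_unique.
    by rewrite divr_ge0 ?mulr_ge0 ?(ltW r'_gt0) ?(ltW Q_gt0) ?(ltW det_minus_gt0).
  rewrite expr_div_n [(Dm * Q) ^+ 2]exprMn Q_sqr exprMn r'_sqr.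
  by field; rewrite S0_neq0 S2_neq0 Dm_neq0.
have sqrt_minus :
    Num.sqrt ((2 - 2 * cosK 0 1) * (2 - 2 * cosK 2%:R 3%:R)) = 4 * r / (Dp * Q).
  rewrite s_minus t_minus; apply: sqrtr_unique.
    by rewrite divr_ge0 ?mulr_ge0 ?(ltW r_gt0) ?(ltW Q_gt0) ?(ltW det_plus_gt0).
  rewrite expr_div_n [(Dp * Q) ^+ 2]exprMn Q_sqr exprMn r_sqr.
  by field; rewrite S0_neq0 S2_neq0 Dp_neq0.
rewrite /A /D addrC cos_half_acosD // cos_half_acosB // sqrt_plus sqrt_minus.
by split; field; rewrite Q_neq0 Dp_neq0 Dm_neq0.
Qed.

Lemma z2_symmetrization :
  let K := z2_pattern_inv in
  let cosK i j := - (K i j / (Num.sqrt (K i i) * Num.sqrt (K j j))) in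
  let A := acos (cosK 2%:R 3%:R) in
  let D := acos (cosK 0 1) in
  let Ap := cos ((A + D) / 2) in
  let Am := cos ((D - A) / 2) in
  let ap := cos ((acos a + acos d) / 2) in
  let am := cos ((acos a - acos d) / 2) in
  exists q : 'I_4 -> 'rV[R]_4,
    [/\ spherical_tetrahedron q,
        is_gram_matrix q (sym_pattern (- (Ap / Am)) (- (cosK 1 3%:R / Am))
                                      (- (cosK 1 2%:R / Am))) &
        edge_matrix q = sym_pattern (ap / am) (b / am) (c / am)].
Proof.
move=> K cosK A D Ap Am ap am.
move: (r_gt0) (r'_gt0) (Q_gt0) => r_pos r'_pos Q_pos.
have [ApE AmE] : Ap = (r' / Dm - r / Dp) / Q /\ Am = (r' / Dm + r / Dp) / Q.
  exact: z2_dihedral_half_cosines.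
have [a_bd' d_bd'] : -1 <= a <= 1 /\ -1 <= d <= 1.
  by case/andP: a_bd => *; case/andP: d_bd => *; split; apply/andP; split; lra.
have apE : ap = (r - r') / 4 by rewrite /ap cos_half_acosD.
have amE : am = (r + r') / 4 by rewrite /am cos_half_acosB.
have cosK_off i j : K i i = S0 -> K j j = S2 -> cosK i j = - (K i j / Q).
  by move=> Kii Kjj; rewrite /cosK Kii Kjj.
have cosK13 : cosK 1 3%:R = (Z / Dp + Z' / Dm) / Q.
  by rewrite cosK_off /K /z2_pattern_inv ?mxE //= /K02; ring.
have cosK12 : cosK 1 2%:R = (Z / Dp - Z' / Dm) / Q.
  by rewrite cosK_off /K /z2_pattern_inv ?mxE //= /K03; ring.
have DpE : Dp = r ^+ 2 - Z ^+ 2 by rewrite r_sqr.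
have DmE : Dm = r' ^+ 2 - Z' ^+ 2 by rewrite r'_sqr.
have Dp_gt0 : 0 < r ^+ 2 - Z ^+ 2 by rewrite -DpE.
have Dm_gt0 : 0 < r' ^+ 2 - Z' ^+ 2 by rewrite -DmE.
have Zr : Z ^+ 2 < r ^+ 2 by rewrite -subr_gt0.
have Zr' : Z' ^+ 2 < r' ^+ 2 by rewrite -subr_gt0.
have [rZ_gt0 rZ'_gt0] : 0 < r + Z /\ 0 < r - Z by split; nra.
have [r'Z'_gt0 r'Z'_gt0'] : 0 < r' + Z' /\ 0 < r' - Z' by split; nra.
have rr'_gt0 : 0 < r + r' by rewrite addr_gt0.
have := @symmetric_tetrahedron_exists _ (2 * (r + Z) / (r + r')) (2 * (r - Z) / (r + r'))
  (2 * (r' + Z') / (r + r')) (2 * (r' - Z') / (r + r')).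
rewrite !divr_gt0 ?mulr_gt0 //.
have -> : 2 * (r + Z) / (r + r') + 2 * (r - Z) / (r + r') + 2 * (r' + Z') / (r + r')
    + 2 * (r' - Z') / (r + r') = 4 by field; rewrite gt_eqF.
move=> /(_ isT isT isT isT erefl) [q [tet [w [normal_w gramE]] edgeE]].
exists q; split=> //.
  exists w; split=> //; rewrite -gramE; congr sym_pattern;
    rewrite ?ApE AmE ?cosK13 ?cosK12 DpE DmE; field;
    rewrite !gt_eqF //;
    by repeat (assumption || apply: addr_gt0 || apply: mulr_gt0).
by rewrite edgeE apE amE; congr sym_pattern; rewrite /Z /Z'; field; rewrite gt_eqF.
Qed.

End Z2Pattern.

Lemma Z2_symmetric_edge_matrix (R : realType) (p : 'I_4 -> 'rV[R]_4) :
  spherical_tetrahedron p -> Z2_symmetric p ->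
  edge_matrix p = z2_pattern (dot (p 0) (p 1)) (dot (p 2%:R) (p 3%:R))
                             (dot (p 0) (p 2%:R)) (dot (p 0) (p 3%:R)).
Proof.
move=> [unit_p _] [M [MMT [p01 [_ [p23 p32]]]]].
have dot13 : dot (p 1) (p 3%:R) = dot (p 0) (p 2%:R) by rewrite -p01 -p23 dot_orthomx.
have dot12 : dot (p 1) (p 2%:R) = dot (p 0) (p 3%:R) by rewrite -p01 -p32 dot_orthomx.
by apply/matrixP; apply: ord4_ind; apply: ord4_ind;
  rewrite !mxE /= ?unit_p ?dot13 ?dot12 // dotC ?dot13 ?dot12.
Qed.

Theorem lemma4 (R : realType) (p v : 'I_4 -> 'rV[R]_4) :
  spherical_tetrahedron p ->
  (forall i, outer_normal p i (v i)) ->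
  Z2_symmetric p ->
  let lA := edge_length p 0 1 in
  let lD := edge_length p 2%:R 3%:R in
  let lB := edge_length p 0 2%:R in
  let lC := edge_length p 0 3%:R in
  (* A, D, B, C: dihedral angles along the edges p0p1, p2p3, p0p2, p0p3 *)
  let A := dihedral_angle v 2%:R 3%:R in
  let D := dihedral_angle v 0 1 in
  let B := dihedral_angle v 1 3%:R in
  let C := dihedral_angle v 1 2%:R in
  let ap := cos ((lA + lD) / 2) in
  let am := cos ((lA - lD) / 2) in
  let b := cos lB in
  let c := cos lC in
  let Ap := cos ((A + D) / 2) in
  let Am := cos ((D - A) / 2) in
  let cB := cos B in
  let cC := cos C in
  exists q : 'I_4 -> 'rV[R]_4,
    spherical_tetrahedron q /\
    is_gram_matrix q (sym_pattern (- (Ap / Am)) (- (cB / Am)) (- (cC / Am))) /\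
    edge_matrix q = sym_pattern (ap / am) (b / am) (c / am).
Proof.
move=> tet normal sym lA lD lB lC A D B C ap am b c Ap Am cB cC.
have edgeE := Z2_symmetric_edge_matrix tet sym.
have posdef (x : 'rV[R]_4) : x != 0 -> 0 < (x *m edge_matrix p *m x^T) 0 0.
  exact: edge_matrix_posdef.
rewrite edgeE in posdef.
have [a_bd d_bd det_plus_gt0 det_minus_gt0] := z2_pattern_posdef_bounds posdef.
have KE : z2_pattern_inv (dot (p 0) (p 1)) (dot (p 2%:R) (p 3%:R)) (dot (p 0) (p 2%:R))
    (dot (p 0) (p 3%:R)) *m edge_matrix p = 1%:M.
  by rewrite edgeE mul_z2_pattern_inv // gt_eqF.
have [unit_p _] := tet; have unit_v i := (normal i).1.
have [cos_b _] := cos_acos_dot (unit_p 0) (unit_p 2%:R).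
have [cos_c _] := cos_acos_dot (unit_p 0) (unit_p 3%:R).
have [_ cos_B] := cos_acos_dot (unit_v 1) (unit_v 3%:R).
have [_ cos_C] := cos_acos_dot (unit_v 1) (unit_v 2%:R).
rewrite /cB /cC /b /c /B /C /lB /lC /edge_length /dihedral_angle cos_b cos_c cos_B cos_C.
rewrite /Ap /Am /A /D /ap /am /lA /lD /edge_length /dihedral_angle.
rewrite !(dot_outer_normals tet normal KE).
have [q [? ? ?]] := z2_symmetrization a_bd d_bd det_plus_gt0 det_minus_gt0.
by exists q.
Qed.
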